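(* For every constant specification $\mathsf{CS}$ for $\mathsf{LPC}^+$ there exist formulas $\phi,\psi$ and a term $t$ such that $\models_{\mathsf{LPC}^+_{\mathsf{CS}}}\phi\Leftrightarrow\psi$ but $\not\models_{\mathsf{LPC}^+_{\mathsf{CS}}} t{:}\phi\Leftrightarrow t{:}\psi$. (Indeed one may take $\phi = (p\wedge p)>p$, $\psi=p\vee\neg p$ and $t=x$ a justification variable.)
   Context: Language: countable sets $\mathsf{Const}$, $\mathsf{Var}$, $\mathsf{Prop}$; terms $t ::= c \mid x \mid t\cdot t \mid t+t \mid\ !t$; formulas $\phi ::= p \mid \neg\phi \mid \phi\wedge\phi \mid \phi\supset\phi \mid \phi>\phi \mid t{:}\phi$; $\mathsf{Tm},\mathsf{Fm}$ the sets of terms and formulas; $\phi\vee\psi:=\neg(\neg\phi\wedge\neg\psi)$, $\phi\Leftrightarrow\psi:=(\phi>\psi)\wedge(\psi>\phi)$. A constant specification $\mathsf{CS}$ is a set of formulas $c{:}\phi$ with $c\in\mathsf{Const}$ and $\phi$ an instance of the axiom schemes (A1) classical tautologies, (A2) $(\phi>(\psi\supset\chi))\supset((\phi>\psi)\supset(\phi>\chi))$, (A3) $\phi>\phi$, (A4) $(\phi>\psi)\supset(\phi\supset\psi)$, (A5) $(s{:}(\phi>\psi)\wedge t{:}\phi) > (s\cdot t){:}\psi$, (A6) $s{:}\phi > (s+t){:}\phi$, (A7) $t{:}\phi>(s+t){:}\phi$, (A8) $t{:}\phi>\phi$, (A9) $t{:}\phi > (!t){:}t{:}\phi$. A relational model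 is $\mathcal M=(W,W_N,R_{Fm},R_{Tm},V)$: $W$ a nonempty set, $W_N\subseteq W$ nonempty (normal states); $R_{Fm}$ assigns to each $\phi\in\mathsf{Fm}$ a relation $R_\phi\subseteq W_N\times W_N$; $R_{Tm}$ assigns to each $t\in\mathsf{Tm}$ a relation $R_t\subseteq W\times W$; $V$ assigns to each normal state $w$ a set $V(w)\subseteq\mathsf{Prop}$ and to each $w\in W\setminus W_N$ a set $V(w)\subseteq\mathsf{Fm}$. $R_\phi(w)$, $R_t(w)$ denote the sets of successors. Truth: at $w\in W\setminus W_N$, $\mathcal M,w\models\phi$ iff $\phi\in V(w)$; at $w\in W_N$: $p$ iff $p\in V(w)$; $\neg,\wedge,\supset$ classically; $\phi>\psi$ iff $R_\phi(w)\subseteq[\psi]$; $t{:}\phi$ iff $R_t(w)\subseteq[\phi]$, where $[\phi]=\{w\in W:\mathcal M,w\models\phi\}$. $\mathcal M$ is an $\mathsf{LPC}^+_{\mathsf{CS}}$-model if for all $w\in W_N$: (1) $R_\phi(w)\subseteq[\phi]$ for all $\phi$; (2) if $w\in[\phi]$ then $w\in R_\phi(w)$; (3) $R_c(w)\subseteq[\phi]$ for each $c{:}\phi\in\mathsf{CS}$; (4) $R_{s+t}(w)\subseteq R_s(w)\cap R_t(w)$; (5) for all $v\in R_{s\cdot t}(w)$ and all $\phi,\psi$: if $w\in[s{:}(\phi>\psi)\wedge t{:}\phi]$ then $v\in[\psi]$; (6) $wR_tw$ for all $t$; (7) for all $t$ and $v,u\in W$, if $wR_{!t}v$ and $vR_tu$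 then $wR_tu$. $\models_{\mathsf{LPC}^+_{\mathsf{CS}}}\phi$ means $\phi$ is true at every normal state of every $\mathsf{LPC}^+_{\mathsf{CS}}$-model. *)

From Stdlib Require Import Bool.

Inductive Tm : Type :=
  | TConst : nat -> Tm
  | TVar : nat -> Tm
  | TApp : Tm -> Tm -> Tm
  | TSum : Tm -> Tm -> Tm
  | TBang : Tm -> Tm.

Inductive Fm : Type :=
  | FAtom : nat -> Fm
  | FNeg : Fm -> Fm
  | FAnd : Fm -> Fm -> Fm
  | FImp : Fm -> Fm -> Fm
  | FCond : Fm -> Fm -> Fm    (* conditional > *)
  | FJust : Tm -> Fm -> Fm.

Definition FOr (a b : Fm) : Fm := FNeg (FAnd (FNeg a) (FNeg b)).
Definition FIff (a b : Fm) : Fm := FAnd (FCond a b) (FCond b a).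

Fixpoint beval (v : Fm -> bool) (f : Fm) : bool :=
  match f with
  | FAtom _ => v f
  | FNeg a => negb (beval v a)
  | FAnd a b => beval v a && beval v b
  | FImp a b => implb (beval v a) (beval v b)
  | FCond _ _ => v f
  | FJust _ _ => v f
  end.

Definition tautology (f : Fm) : Prop := forall v, beval v f = true.

Inductive axiom_inst : Fm -> Prop :=
  | ax1 : forall f, tautology f -> axiom_inst f
  | ax2 : forall a b c, axiom_inst
      (FImp (FCond a (FImp b c)) (FImp (FCond a b) (FCond a c)))
  | ax3 : forall a, axiom_inst (FCond a a)
  | ax4 : forall a b, axiom_inst (FImp (FCond a b) (FImp a b))
  | ax5 : forall s t a b, axiom_inst
      (FCond (FAnd (FJust s (FCond a b)) (FJust t a)) (FJust (TApp s t) b))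
  | ax6 : forall s t a, axiom_inst (FCond (FJust s a) (FJust (TSum s t) a))
  | ax7 : forall s t a, axiom_inst (FCond (FJust t a) (FJust (TSum s t) a))
  | ax8 : forall t a, axiom_inst (FCond (FJust t a) a)
  | ax9 : forall t a, axiom_inst (FCond (FJust t a) (FJust (TBang t) (FJust t a))).

Definition const_spec (CS : Fm -> Prop) : Prop :=
  forall f, CS f -> exists c a, f = FJust (TConst c) a /\ axiom_inst a.

Record model : Type := {
  W : Type;
  WN : W -> Prop;
  RFm : Fm -> W -> W -> Prop;
  RTm : Tm -> W -> W -> Prop;
  Vnorm : W -> nat -> Prop;             (* V(w) ⊆ Prop for normal w *)
  Vnon : W -> Fm -> Prop;               (* V(w) ⊆ Fm for non-normal w *)
  W_inhab : exists w, WN w;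
  RFm_normal : forall f w v, RFm f w v -> WN w /\ WN v
}.

Fixpoint sat (M : model) (w : W M) (f : Fm) : Prop :=
  (~ WN M w /\ Vnon M w f) \/
  (WN M w /\
   match f with
   | FAtom p => Vnorm M w p
   | FNeg a => ~ sat M w a
   | FAnd a b => sat M w a /\ sat M w b
   | FImp a b => sat M w a -> sat M w b
   | FCond a b => forall v, RFm M a w v -> sat M v b
   | FJust t a => forall v, RTm M t w v -> sat M v a
   end).

Definition LPCplus_model (CS : Fm -> Prop) (M : model) : Prop :=
  forall w : W M, WN M w ->
    (forall f v, RFm M f w v -> sat M v f) /\
    (forall f, sat M w f -> RFm M f w w) /\
    (forall c f, CS (FJust (TConst c) f) -> forall v, RTm M (TConst c) w v -> sat M v f) /\
    (forall s t v, RTm M (TSum s t) w v -> RTm M s w v /\ RTm M t w v) /\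
    (forall s t v a b, RTm M (TApp s t) w v ->
        sat M w (FAnd (FJust s (FCond a b)) (FJust t a)) -> sat M v b) /\
    (forall t, RTm M t w w) /\
    (forall t v u, RTm M (TBang t) w v -> RTm M t v u -> RTm M t w u).

Definition valid (CS : Fm -> Prop) (f : Fm) : Prop :=
  forall M : model, LPCplus_model CS M -> forall w : W M, WN M w -> sat M w f.

(* Validity of [phi <=> psi] constrains [phi] and [psi] only at
   normal states, whereas [t:phi] also inspects the non-normal successors of
   [R_t], where formulas are evaluated by an arbitrary set [V(w)] of formulas.
   Both [(p /\ p) > p] and [p \/ ~p] are true at every normal state, but a
   non-normal state whose valuation contains [p \/ ~p] and nothing else,
   reachable only through the variable [x], separates [x:(p \/ ~p)] from
   [x:((p /\ p) > p)].  With a single normal state, where every other formula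
   is evaluated classically and [>] is read as material implication, every
   axiom instance is true, so such a model respects every constant
   specification. *)
From Stdlib Require Import Bool ClassicalEpsilon.

Section NormalStates.

Variables (M : model) (w : W M).
Hypothesis normal_w : WN M w.

Let sat_normal (Q P : Prop) : (~ WN M w /\ Q) \/ (WN M w /\ P) <-> P.
Proof. tauto. Qed.

Lemma sat_Atom p : sat M w (FAtom p) <-> Vnorm M w p.
Proof. exact (sat_normal _ _). Qed.

Lemma sat_Neg a : sat M w (FNeg a) <-> ~ sat M w a.
Proof. exact (sat_normal _ _). Qed.

Lemma sat_And a b : sat M w (FAnd a b) <-> sat M w a /\ sat M w b.
Proof. exact (sat_normal _ _). Qed.

Lemma sat_Imp a b : sat M w (FImp a b) <-> (sat M w a -> sat M w b).
Proof. exact (sat_normal _ _). Qed.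

Lemma sat_Cond a b :
  sat M w (FCond a b) <-> forall v, RFm M a w v -> sat M v b.
Proof. exact (sat_normal _ _). Qed.

Lemma sat_Just t a :
  sat M w (FJust t a) <-> forall v, RTm M t w v -> sat M v a.
Proof. exact (sat_normal _ _). Qed.

Lemma sat_Or a b : sat M w (FOr a b) <-> ~ (~ sat M w a /\ ~ sat M w b).
Proof. unfold FOr; rewrite sat_Neg, sat_And, !sat_Neg; tauto. Qed.

End NormalStates.

Section Validity.

Variable CS : Fm -> Prop.

Lemma valid_Cond_r a b : valid CS b -> valid CS (FCond a b).
Proof.
  intros Hb M HM w Hw; apply sat_Cond; auto.
  intros v Hv; apply Hb; auto; apply (RFm_normal M a w v Hv).
Qed.

Lemma valid_Iff a b : valid CS a -> valid CS b -> valid CS (FIff a b).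
Proof.
  intros Ha Hb M HM w Hw; unfold FIff; rewrite sat_And by auto.
  split; apply valid_Cond_r; auto.
Qed.

Lemma valid_excluded_middle a : valid CS (FOr a (FNeg a)).
Proof. intros M _ w Hw; rewrite sat_Or, sat_Neg by auto; tauto. Qed.

Lemma valid_Cond_And_l a b : valid CS (FCond (FAnd a b) a).
Proof.
  intros M HM w Hw; apply sat_Cond; auto.
  intros v Hv; destruct (HM w Hw) as [succ_sat _].
  assert (Hab : sat M v (FAnd a b)) by exact (succ_sat _ _ Hv).
  apply sat_And in Hab; [tauto | exact (proj2 (RFm_normal M _ _ _ Hv))].
Qed.

End Validity.

Section Countermodel.

Variables (x : nat) (chi : Fm).

(* Truth at the normal state of [countermodel]: atoms false, [>] material,
   and [t:g] additionally demands [g = chi] when [t] is the variable [x]. *)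
Fixpoint cval (f : Fm) : Prop :=
  match f with
  | FAtom _ => False
  | FNeg a => ~ cval a
  | FAnd a b => cval a /\ cval b
  | FImp a b => cval a -> cval b
  | FCond a b => cval a -> cval b
  | FJust t g => cval g /\ (t = TVar x -> g = chi)
  end.

Definition countermodel : model.
Proof.
  refine {| W := bool; WN := fun w => w = true;
            RFm := fun f w v => w = true /\ v = true /\ cval f;
            RTm := fun t w v => w = true /\ (v = true \/ (t = TVar x /\ v = false));
            Vnorm := fun _ _ => False;
            Vnon := fun _ f => f = chi |}.
  - exists true; reflexivity.
  - intros f w v [Hw [Hv _]]; auto.
Defined.

Lemma sat_countermodel_false f : sat countermodel false f <-> f = chi.
Proof. destruct f; simpl; intuition discriminate. Qed.

Lemma sat_countermodel_true f : sat countermodel true f <-> cval f.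
Proof.
  assert (Hw : WN countermodel true) by reflexivity.
  induction f as [p|a IHa|a IHa b IHb|a IHa b IHb|a IHa b IHb|t a IHa].
  - rewrite sat_Atom by exact Hw; reflexivity.
  - rewrite sat_Neg, IHa by exact Hw; reflexivity.
  - rewrite sat_And, IHa, IHb by exact Hw; reflexivity.
  - rewrite sat_Imp, IHa, IHb by exact Hw; reflexivity.
  - rewrite sat_Cond by exact Hw; simpl; split.
    + intros H Ha; apply IHb, H; auto.
    + intros H v [_ [-> Ha]]; apply IHb, H, Ha.
  - rewrite sat_Just by exact Hw; simpl; split.
    + intros H; split.
      * apply IHa, H; auto.
      * intros ->; apply sat_countermodel_false, H; auto.
    + intros [Ha Hchi] v [_ [-> | [Ht ->]]].
      * apply IHa, Ha.
      * apply sat_countermodel_false, Hchi, Ht.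
Qed.

Lemma tautology_cval f : tautology f -> cval f.
Proof.
  intro Htaut.
  set (v := fun g => if excluded_middle_informative (cval g) then true else false).
  assert (Hatom : forall g, v g = true <-> cval g).
  { intro g; unfold v; destruct excluded_middle_informative; intuition discriminate. }
  assert (Hv : forall g, beval v g = true <-> cval g).
  { induction g as [| g IHg | g1 IH1 g2 IH2 | g1 IH1 g2 IH2 | |];
      try apply Hatom; cbn [beval cval].
    - rewrite negb_true_iff, <- not_true_iff_false, IHg; reflexivity.
    - rewrite andb_true_iff, IH1, IH2; reflexivity.
    - rewrite <- IH1, <- IH2; destruct (beval v g1), (beval v g2); simpl; tauto. }
  apply Hv, Htaut.
Qed.

(* Only the variable [x] is constrained in [cval], and the terms [s.t],
   [s+t] and [!t] on the right of (A5)-(A7), (A9) are never variables. *)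
Lemma axiom_inst_cval f : axiom_inst f -> cval f.
Proof.
  destruct 1; simpl; try tauto.
  - apply tautology_cval; assumption.
  - intros [[H _] [Ha _]]; split; [auto | discriminate].
  - intros [H _]; split; [auto | discriminate].
  - intros [H _]; split; [auto | discriminate].
  - intros H; split; [exact H | discriminate].
Qed.

Lemma countermodel_LPCplus CS : const_spec CS -> LPCplus_model CS countermodel.
Proof.
  intros HCS w Hw; simpl in Hw; subst w.
  split; [|split; [|split; [|split; [|split; [|split]]]]].
  - intros f v [_ [-> Hf]]; apply sat_countermodel_true, Hf.
  - intros f Hf; simpl; rewrite sat_countermodel_true in Hf; auto.
  - intros c f Hc v [_ [-> | [Ht _]]]; [|discriminate].
    destruct (HCS _ Hc) as [c' [a [E Ha]]]; injection E as _ ->.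
    apply sat_countermodel_true, axiom_inst_cval, Ha.
  - intros s t v [_ [-> | [Ht _]]]; [simpl; auto | discriminate].
  - intros s t v a b [_ [-> | [Ht _]]] Hs; [|discriminate].
    rewrite sat_countermodel_true in *; simpl in Hs; tauto.
  - simpl; auto.
  - intros t v u [_ [-> | [Ht _]]] Hu; [exact Hu | discriminate].
Qed.

Lemma not_valid_Var_Iff CS phi :
  const_spec CS -> cval chi -> phi <> chi ->
  ~ valid CS (FIff (FJust (TVar x) phi) (FJust (TVar x) chi)).
Proof.
  intros HCS Hchi Hneq Hvalid.
  specialize (Hvalid countermodel (countermodel_LPCplus CS HCS) true eq_refl).
  rewrite sat_countermodel_true in Hvalid; simpl in Hvalid.
  destruct Hvalid as [_ Hback].
  apply Hneq, Hback; auto.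
Qed.

End Countermodel.

Theorem mainTheorem5 :
  forall CS : Fm -> Prop, const_spec CS ->
  exists (phi psi : Fm) (t : Tm),
    valid CS (FIff phi psi) /\ ~ valid CS (FIff (FJust t phi) (FJust t psi)).
Proof.
  intros CS HCS.
  set (p := FAtom 0).
  exists (FCond (FAnd p p) p), (FOr p (FNeg p)), (TVar 0); split.
  - apply valid_Iff; [apply valid_Cond_And_l | apply valid_excluded_middle].
  - apply not_valid_Var_Iff; [exact HCS | simpl; tauto | discriminate].
Qed.
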